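(* Let $\phi:[0,\infty)\to\mathbb R$ be convex with $\phi(1)=0$, and let $E$ be the associated entropy. For every $\mathbf p\in\Delta^N$ with $\langle\mathbf u^{(1)},\mathbf p\rangle>0$ one has $E(\mathbf M\mathbf p)\le E(\mathbf p)$. Moreover, if $\phi$ is strictly convex, then $E(\mathbf M\mathbf p)=E(\mathbf p)$ if and only if $\mathbf p$ belongs to the quasi-stationary set $\mathcal Q$.
   Context: Fix an integer $N\ge 2$ and a type selection vector $(\mathsf s_0,\dots,\mathsf s_N)$ with $\mathsf s_0=0$, $\mathsf s_N=1$ and $0<\mathsf s_i<1$ for $1\le i\le N-1$. The Moran matrix $\mathbf M=(M_{ij})_{i,j=0}^N$ is defined by $M_{ij}=0$ if $|i-j|>1$, $M_{i+1,i}=\frac{N-i}{N}\mathsf s_i$, $M_{i-1,i}=\frac{i}{N}(1-\mathsf s_i)$, $M_{ii}=1-M_{i+1,i}-M_{i-1,i}$ (column-stochastic; $M_{ij}$ is the probability of going from state $j$ to state $i$; probability vectors evolve by $\mathbf p\mapsto\mathbf M\mathbf p$). The core matrix $\widetilde{\mathbf M}=(M_{ij})_{i,j=1}^{N-1}$ has a simple Perron eigenvalue $\mu_1>0$ with positive left/right eigenvectors $\widetilde{\mathbf u}^{(1)},\widetilde{\mathbf v}^{(1)}\in\mathbb R^{N-1}$, normalized by $\sum_i v^{(1)}_i=1$, $\sum_i u^{(1)}_iv^{(1)}_i=1$. Let $\Delta^N=\{\mathbf x\in\mathbb R^{N+1}:x_i\ge0,\ \sum_{i=0}^Nx_i=1\}$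 and, for $\mathbf p=(p_0,\dots,p_N)$, $\langle\mathbf u^{(1)},\mathbf p\rangle:=\sum_{i=1}^{N-1}u^{(1)}_ip_i$. For $\mathbf p\in\Delta^N$ with $\langle\mathbf u^{(1)},\mathbf p\rangle>0$ the entropy is \[ E(\mathbf p)=\sum_{i=1}^{N-1}\phi\!\left(\frac{p_i}{v^{(1)}_i\langle\mathbf u^{(1)},\mathbf p\rangle}\right)v^{(1)}_iu^{(1)}_i . \] Let $\hat{\mathbf v}^{(1)}=(0,v^{(1)}_1,\dots,v^{(1)}_{N-1},0)\in\mathbb R^{N+1}$ and $\mathbf e_0,\mathbf e_N$ the standard basis vectors of $\mathbb R^{N+1}$ at positions $0$ and $N$. The quasi-stationary set is $\mathcal Q=\{\alpha\mathbf e_0+\lambda\hat{\mathbf v}^{(1)}+\beta\mathbf e_N:\ \alpha,\beta,\lambda\ge0,\ \alpha+\beta+\lambda=1\}$. *)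

From mathcomp Require Import all_boot all_order all_algebra.
From mathcomp Require Import reals.
Set Implicit Arguments. Unset Strict Implicit. Unset Printing Implicit Defensive.
Import Order.TTheory GRing.Theory Num.Theory.
Local Open Scope ring_scope.

Section Moran.
Variables (R : realType) (N : nat) (s : 'I_N.+1 -> R).

(* M_{ij}: probability of going from state j to state i (column-stochastic). *)
Definition moran_entry (i j : 'I_N.+1) : R :=
  let up := ((N - j)%:R / N%:R) * s j in
  let down := (j%:R / N%:R) * (1 - s j) in
  if (i : nat) == j.+1 then up
  else if (j : nat) == i.+1 then down
  else if i == j then 1 - up - down
  else 0.

Definition moran : 'M[R]_N.+1 := \matrix_(i, j) moran_entry i j.

Definition moran_apply (p : 'I_N.+1 -> R) : 'I_N.+1 -> R :=
  fun i => \sum_(j < N.+1) moran i j * p j.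

Definition interior (i : 'I_N.+1) : bool := (0 < i)%N && (i < N)%N.

Definition in_simplex (p : 'I_N.+1 -> R) : Prop :=
  (forall i, 0 <= p i) /\ \sum_(i < N.+1) p i = 1.

Definition upair (u p : 'I_N.+1 -> R) : R :=
  \sum_(i < N.+1 | interior i) u i * p i.

Definition entropy (phi : R -> R) (u v p : 'I_N.+1 -> R) : R :=
  \sum_(i < N.+1 | interior i) phi (p i / (v i * upair u p)) * v i * u i.

Definition vhat (v : 'I_N.+1 -> R) : 'I_N.+1 -> R :=
  fun i => if interior i then v i else 0.

Definition quasi_stationary (v : 'I_N.+1 -> R) (p : 'I_N.+1 -> R) : Prop :=
  exists alpha beta lambda : R,
    [/\ 0 <= alpha, 0 <= beta, 0 <= lambda, alpha + beta + lambda = 1 &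
      forall i : 'I_N.+1,
        p i = alpha * (i == ord0)%:R + lambda * vhat v i + beta * (i == ord_max)%:R].
End Moran.

Definition convex_on_nonneg (R : realType) (phi : R -> R) : Prop :=
  forall x y t : R, 0 <= x -> 0 <= y -> 0 <= t <= 1 ->
    phi (t * x + (1 - t) * y) <= t * phi x + (1 - t) * phi y.

Definition strictly_convex_on_nonneg (R : realType) (phi : R -> R) : Prop :=
  forall x y t : R, 0 <= x -> 0 <= y -> x != y -> 0 < t < 1 ->
    phi (t * x + (1 - t) * y) < t * phi x + (1 - t) * phi y.

(* The entropy identity rests on a change of weights.  With [U = <u, p>] and
   the likelihood ratios [x_j = p_j / (v_j U)], the matrix
   [w_ij = M_ij v_j / (mu v_i)] on interior states is row-stochastic (v is a
   right eigenvector), [<u, M p> = mu U] (u is a left eigenvector), and the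
   ratios of [M p] are the [w]-averages of those of [p].  Hence
   [E(M p) = sum_i phi (sum_j w_ij x_j) v_i u_i], while, again by the left
   eigenvector equation, [E(p) = sum_i (sum_j w_ij phi x_j) v_i u_i], and
   Jensen's inequality row by row gives [E(M p) <= E(p)].  For strictly
   convex [phi], equality forces every row to be an equality case of Jensen;
   since [w] has a positive diagonal and superdiagonal on the interior, the
   ratios of neighbouring interior states agree, so [x] is constant, i.e.
   [p] is proportional to [v] on the interior: exactly [p \in Q]. *)
From mathcomp Require Import all_boot all_order all_algebra.
From mathcomp Require Import reals.
From mathcomp Require Import ring lra zify.
Set Implicit Arguments. Unset Strict Implicit. Unset Printing Implicit Defensive.
Import Order.TTheory GRing.Theory Num.Theory.
Local Open Scope ring_scope.

Section Jensen.
Variables (R : realType) (phi : R -> R) (I : finType).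
Hypothesis phi_convex : convex_on_nonneg phi.

(* For [S = 0] the tail vanishes on both sides (with [w j / 0 = 0]), so no
   positivity of [S] is needed. *)
Lemma big_weighted_split (P : pred I) (w : I -> R) (a : I) (f : I -> R) :
  (forall j, P j -> 0 <= w j) -> P a ->
  let S := \sum_(j | P j && (j != a)) w j in
  \sum_(j | P j) w j * f j =
    w a * f a + S * \sum_(j | P j && (j != a)) (w j / S) * f j.
Proof.
move=> w_ge0 Pa S; rewrite (bigD1 a Pa) /=; congr (_ + _).
have w'_ge0 j : P j && (j != a) -> 0 <= w j by case/andP=> /w_ge0.
have [S0|S_neq0] := eqVneq S 0.
  rewrite S0 mul0r; apply: big1 => j Pj.
  by rewrite (psumr_eq0P w'_ge0 S0) ?mul0r.
by rewrite mulr_sumr; apply: eq_bigr => j _; rewrite mulrA mulrCA divff ?mulr1.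
Qed.

Lemma jensen (P : pred I) (w x : I -> R) :
  (forall j, P j -> 0 <= w j) -> (forall j, P j -> 0 <= x j) ->
  \sum_(j | P j) w j = 1 ->
  phi (\sum_(j | P j) w j * x j) <= \sum_(j | P j) w j * phi (x j).
Proof.
move: {2}#|P| (leqnn #|P|) => n; elim: n P w => [|n IH] P w card_P w_ge0 x_ge0 w1.
  have P0 : P =1 xpred0 by move: card_P; rewrite leqn0 => /eqP/card0_eq.
  by move: w1; rewrite big_pred0 // => /eqP; rewrite eq_sym oner_eq0.
have [a Pa|P0] := pickP P; last first.
  by move: w1; rewrite big_pred0 // => /eqP; rewrite eq_sym oner_eq0.
rewrite (big_weighted_split x w_ge0 Pa) (big_weighted_split (phi \o x) w_ge0 Pa) /=.
set P' := fun j => P j && (j != a); set S := \sum_(j | P' j) w j.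
have w'_ge0 j : P' j -> 0 <= w j by case/andP=> /w_ge0.
have wh_ge0 j : P' j -> 0 <= w j / S by move=> Pj; rewrite divr_ge0 ?w'_ge0 ?sumr_ge0.
have S_ge0 : 0 <= S by apply: sumr_ge0.
have waS : 1 - w a = S by rewrite -w1 (bigD1 a Pa) addrC addKr.
set y := \sum_(j | P' j) w j / S * x j.
have y_ge0 : 0 <= y.
  by apply: sumr_ge0 => j Pj; rewrite mulr_ge0 ?wh_ge0 //; case/andP: Pj => /x_ge0.
have := phi_convex (x_ge0 _ Pa) y_ge0 (t := w a).
rewrite waS w_ge0 //= => /(_ ltac:(lra)) le_convex.
apply: (le_trans le_convex); rewrite lerD2l.
have [S0|S_neq0] := eqVneq S 0; first by rewrite S0 !mul0r.
rewrite ler_wpM2l // IH // => [|j /andP[/x_ge0] //|]; last first.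
  by rewrite -mulr_suml divff.
have -> : #|P'| = #|[predD1 P & a]| by apply: eq_card => j; rewrite !inE andbC.
by move: card_P; rewrite (cardD1 a) unfold_in Pa.
Qed.

Lemma jensen_eq_mean (P : pred I) (w x : I -> R) (a : I) :
  strictly_convex_on_nonneg phi ->
  (forall j, P j -> 0 <= w j) -> (forall j, P j -> 0 <= x j) ->
  \sum_(j | P j) w j = 1 -> P a -> 0 < w a ->
  \sum_(j | P j) w j * phi (x j) <= phi (\sum_(j | P j) w j * x j) ->
  x a = \sum_(j | P j) w j * x j.
Proof.
move=> phi_strict w_ge0 x_ge0 w1 Pa wa_gt0.
rewrite (big_weighted_split x w_ge0 Pa) (big_weighted_split (phi \o x) w_ge0 Pa) /=.
set P' := fun j => P j && (j != a); set S := \sum_(j | P' j) w j.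
set y := \sum_(j | P' j) w j / S * x j => le_phi.
have w'_ge0 j : P' j -> 0 <= w j by case/andP=> /w_ge0.
have wh_ge0 j : P' j -> 0 <= w j / S by move=> Pj; rewrite divr_ge0 ?w'_ge0 ?sumr_ge0.
have waS : 1 - w a = S by rewrite -w1 (bigD1 a Pa) addrC addKr.
have [S0|S_neq0] := eqVneq S 0.
  by rewrite S0 mul0r addr0 (_ : w a = 1) ?mul1r //; lra.
have S_gt0 : 0 < S by rewrite lt_def S_neq0 sumr_ge0.
have y_ge0 : 0 <= y.
  by apply: sumr_ge0 => j Pj; rewrite mulr_ge0 ?wh_ge0 //; case/andP: Pj => /x_ge0.
apply/eqP; apply: contraTT le_phi => ne_mean; rewrite -ltNge.
have xa_neq_y : x a != y by apply: contra ne_mean => /eqP <-; rewrite -waS; apply/eqP; ring.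
have := phi_strict (x a) y (w a) (x_ge0 _ Pa) y_ge0 xa_neq_y.
rewrite waS => /(_ ltac:(lra)) lt_strict.
have : phi y <= \sum_(j | P' j) w j / S * phi (x j).
  by apply: jensen => // [j /andP[/x_ge0] //|]; rewrite -mulr_suml divff.
rewrite -(ler_pM2l S_gt0); lra.
Qed.

End Jensen.

Section States.
Variable N : nat.

Lemma not_interior_boundary (j : 'I_N.+1) : ~~ interior j -> j = ord0 \/ j = ord_max.
Proof.
rewrite /interior negb_and -leqNgt -ltnNge => /orP[j0|jN].
  by left; apply/val_inj => /=; lia.
by right; apply/val_inj => /=; have := ltn_ord j; lia.
Qed.

Lemma ord_max_not_interior : ~~ interior (ord_max : 'I_N.+1).
Proof. by rewrite /interior /= ltnn andbF. Qed.

Lemma interior_neq0 (j : 'I_N.+1) : interior j -> j != ord0.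
Proof. by apply: contraTneq => ->. Qed.

Lemma interior_neq_max (j : 'I_N.+1) : interior j -> j != ord_max.
Proof. by apply: contraTneq => ->; apply: ord_max_not_interior. Qed.

Lemma sum_boundary_interior (R : realType) (f : 'I_N.+1 -> R) : (0 < N)%N ->
  \sum_(i < N.+1) f i = f ord0 + f ord_max + \sum_(i < N.+1 | interior i) f i.
Proof.
move=> N_gt0; rewrite (bigID (@interior N)) /= addrC; congr (_ + _).
rewrite (bigD1 ord0) //= (bigD1 ord_max) /=; last first.
  by rewrite ord_max_not_interior; apply/eqP => /(congr1 val) /=; lia.
rewrite big1 ?addr0 // => j /andP[/andP[/not_interior_boundary j_bd j_neq0] j_neqN].
by case: j_bd j_neq0 j_neqN => ->; rewrite eqxx ?andbF.
Qed.

Lemma interior_path_const (T : Type) (f : 'I_N.+1 -> T) :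
  (forall i j : 'I_N.+1, interior i -> interior j -> j = i.+1 :> nat -> f i = f j) ->
  forall i j : 'I_N.+1, interior i -> interior j -> f i = f j.
Proof.
move=> f_step.
have f_up d : forall i j : 'I_N.+1, interior i -> interior j ->
    j = (i + d)%N :> nat -> f i = f j.
  elim: d => [|d IH] i j Ii Ij ji; first by congr f; apply: val_inj; rewrite /= ji addn0.
  have k_lt : (i + d < N.+1)%N by move: Ij ji; rewrite /interior; lia.
  have Ik : interior (Ordinal k_lt) by move: Ii Ij ji; rewrite /interior /=; lia.
  by rewrite (IH _ (Ordinal k_lt)) //; apply: f_step => //=; rewrite ji addnS.
move=> i j Ii Ij; have [ij|ji] := leqP i j.
  by apply: f_up (j - i)%N _ _ Ii Ij _; rewrite subnKC.
by symmetry; apply: f_up (i - j)%N _ _ Ij Ii _; rewrite subnKC // ltnW.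
Qed.

End States.

Lemma quasi_stationaryP (R : realType) (N : nat) (v p : 'I_N.+1 -> R) :
  (0 < N)%N -> in_simplex p -> \sum_(i < N.+1 | interior i) v i = 1 ->
  quasi_stationary v p <-> exists l : R, forall j, interior j -> p j = l * v j.
Proof.
move=> N_gt0 [p_ge0 p1] v1; split.
  move=> [a [b [l [_ _ _ _ pE]]]]; exists l => j Ij.
  by rewrite pE /vhat Ij (negbTE (interior_neq0 Ij)) (negbTE (interior_neq_max Ij))
    !mulr0 addr0 add0r.
move=> [l pE].
have sum_p : \sum_(i < N.+1 | interior i) p i = l.
  by rewrite -[l]mulr1 -v1 mulr_sumr; apply: eq_bigr => j Ij; rewrite pE.
have ord0_neq_max : ord0 != ord_max :> 'I_N.+1 by apply/eqP => /(congr1 val) /=; lia.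
exists (p ord0), (p ord_max), l; split => //.
- by rewrite -sum_p sumr_ge0.
- by rewrite -sum_p -p1 (sum_boundary_interior p N_gt0).
move=> i; rewrite /vhat; have [Ii|/not_interior_boundary[]->] := boolP (interior i).
- by rewrite (negbTE (interior_neq0 Ii)) (negbTE (interior_neq_max Ii)) pE //
    !mulr0 addr0 add0r.
- by rewrite eqxx (negbTE ord0_neq_max) /= !mulr0 mulr1 !addr0.
- by rewrite eqxx eq_sym (negbTE ord0_neq_max) /= !mulr0 mulr1 !add0r.
Qed.

Section MoranMatrix.
Variables (R : realType) (N : nat) (s : 'I_N.+1 -> R).
Hypotheses (s0 : s ord0 = 0) (sN : s ord_max = 1)
  (s_interior : forall i : 'I_N.+1, interior i -> 0 < s i < 1).

Lemma moran_rates_gt0 (j : 'I_N.+1) : interior j ->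
  [/\ 0 < (N - j)%:R / N%:R * s j, 0 < j%:R / N%:R * (1 - s j) &
      0 < 1 - (N - j)%:R / N%:R * s j - j%:R / N%:R * (1 - s j)].
Proof.
move=> Ij; have /andP[sj_gt0 sj_lt1] := s_interior Ij; case/andP: Ij => j_gt0 j_ltN.
have Nj_gt0 : (0 : R) < (N - j)%:R by rewrite ltr0n subn_gt0.
have j_gt0' : (0 : R) < j%:R by rewrite ltr0n.
have invN_gt0 : (0 : R) < N%:R^-1 by rewrite invr_gt0 ltr0n; lia.
have rates1 : (N - j)%:R * N%:R^-1 + j%:R * N%:R^-1 = 1 :> R.
  rewrite -mulrDl -natrD subnK 1?ltnW // divff // pnatr_eq0; lia.
have : 0 < (N - j)%:R * N%:R^-1 * (1 - s j) by rewrite !mulr_gt0 // subr_gt0.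
have : 0 < j%:R * N%:R^-1 * s j by rewrite !mulr_gt0.
by split; [rewrite !mulr_gt0 | rewrite !mulr_gt0 ?subr_gt0 | lra].
Qed.

Lemma moran_ge0 (i j : 'I_N.+1) : interior j -> 0 <= moran s i j.
Proof.
move=> /moran_rates_gt0[up down stay]; rewrite mxE /moran_entry.
by do 3![case: ifP => _; first exact: ltW].
Qed.

Lemma moran_diag_gt0 (i : 'I_N.+1) : interior i -> 0 < moran s i i.
Proof.
move=> /moran_rates_gt0[_ _ stay]; rewrite mxE /moran_entry eqxx !ifN //.
all: by apply/eqP; lia.
Qed.

Lemma moran_superdiag_gt0 (i j : 'I_N.+1) : interior j -> j = i.+1 :> nat ->
  0 < moran s i j.
Proof.
move=> /moran_rates_gt0[_ down _] ji; rewrite mxE /moran_entry ifN.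
  by rewrite ifT // ji.
by apply/eqP; lia.
Qed.

Lemma moran_boundary_col (i j : 'I_N.+1) : interior i -> ~~ interior j ->
  moran s i j = 0.
Proof.
move=> /andP[i_gt0 i_ltN] /not_interior_boundary[]->; rewrite mxE /moran_entry /=.
  by rewrite s0 mulr0; case: eqP => // _; case: eqP => // /(congr1 val) /=; lia.
rewrite sN subrr mulr0; case: eqP => [/= ?|_]; first lia.
by case: eqP => // _; case: eqP => // /(congr1 val) /=; lia.
Qed.

Lemma moran_apply_interior (p : 'I_N.+1 -> R) (i : 'I_N.+1) : interior i ->
  moran_apply s p i = \sum_(j < N.+1 | interior j) moran s i j * p j.
Proof.
move=> Ii; rewrite /moran_apply (bigID (@interior N)) /= [X in _ + X]big1 ?addr0 //.
by move=> j Ij; rewrite moran_boundary_col ?mul0r.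
Qed.

End MoranMatrix.

Section MoranEntropy.
Variables (R : realType) (N : nat) (s : 'I_N.+1 -> R) (mu : R) (u v : 'I_N.+1 -> R).
Hypotheses (s0 : s ord0 = 0) (sN : s ord_max = 1)
  (s_interior : forall i : 'I_N.+1, interior i -> 0 < s i < 1).
Hypotheses (mu_gt0 : 0 < mu)
  (u_gt0 : forall i : 'I_N.+1, interior i -> 0 < u i)
  (v_gt0 : forall i : 'I_N.+1, interior i -> 0 < v i).
Hypothesis v_right : forall i : 'I_N.+1, interior i ->
  \sum_(j < N.+1 | interior j) moran s i j * v j = mu * v i.
Hypothesis u_left : forall j : 'I_N.+1, interior j ->
  \sum_(i < N.+1 | interior i) u i * moran s i j = mu * u j.

Definition ratio (p : 'I_N.+1 -> R) (j : 'I_N.+1) : R := p j / (v j * upair u p).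

(* Doob's h-transform of the core matrix with h = v. *)
Definition doob (i j : 'I_N.+1) : R := moran s i j * v j / (mu * v i).

Let v_neq0 i : interior i -> v i != 0.
Proof. by move=> /v_gt0; rewrite lt0r => /andP[]. Qed.

Let mu_neq0 : mu != 0. Proof. by rewrite gt_eqF. Qed.

Lemma doob_ge0 (i j : 'I_N.+1) : interior i -> interior j -> 0 <= doob i j.
Proof.
by move=> Ii Ij; rewrite divr_ge0 ?mulr_ge0 ?moran_ge0 ?ltW ?v_gt0 ?mulr_gt0.
Qed.

Lemma doob_gt0 (i j : 'I_N.+1) : interior i -> interior j -> 0 < moran s i j ->
  0 < doob i j.
Proof. by move=> Ii Ij M_gt0; rewrite divr_gt0 ?mulr_gt0 ?v_gt0. Qed.

Lemma doob_row_sum (i : 'I_N.+1) : interior i ->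
  \sum_(j < N.+1 | interior j) doob i j = 1.
Proof.
by move=> Ii; rewrite -mulr_suml v_right // divff // mulf_neq0 ?v_neq0.
Qed.

Lemma upair_moran_apply (p : 'I_N.+1 -> R) :
  upair u (moran_apply s p) = mu * upair u p.
Proof.
rewrite /upair; under eq_bigr => i Ii do rewrite moran_apply_interior // mulr_sumr.
rewrite exchange_big /= mulr_sumr; apply: eq_bigr => j Ij.
by rewrite mulrA -u_left // mulr_suml; apply: eq_bigr => i _; rewrite mulrA.
Qed.

Lemma ratio_moran_apply (p : 'I_N.+1 -> R) (i : 'I_N.+1) :
  upair u p != 0 -> interior i ->
  ratio (moran_apply s p) i = \sum_(j < N.+1 | interior j) doob i j * ratio p j.
Proof.
move=> U_neq0 Ii; rewrite /ratio upair_moran_apply moran_apply_interior //.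
rewrite mulr_suml; apply: eq_bigr => j Ij; rewrite /doob; field.
by rewrite U_neq0 mu_neq0 !v_neq0.
Qed.

Variable phi : R -> R.

Lemma entropy_moran_apply (p : 'I_N.+1 -> R) : upair u p != 0 ->
  entropy phi u v (moran_apply s p) =
  \sum_(i < N.+1 | interior i)
    phi (\sum_(j < N.+1 | interior j) doob i j * ratio p j) * v i * u i.
Proof. by move=> U_neq0; apply: eq_bigr => i Ii; rewrite -ratio_moran_apply. Qed.

(* The left eigenvector equation makes [u_i v_i] a stationary measure of [doob]. *)
Lemma entropy_doob_mean (p : 'I_N.+1 -> R) :
  entropy phi u v p =
  \sum_(i < N.+1 | interior i)
    (\sum_(j < N.+1 | interior j) doob i j * phi (ratio p j)) * v i * u i.
Proof.
symmetry; under eq_bigr => i Ii do rewrite mulr_suml mulr_suml.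
rewrite exchange_big /=; apply: eq_bigr => j Ij.
transitivity (\sum_(i < N.+1 | interior i) (u i * moran s i j) *
                (phi (ratio p j) * v j / mu)).
  by apply: eq_bigr => i Ii; rewrite /doob; field; rewrite mu_neq0 !v_neq0.
by rewrite -mulr_suml u_left //; field.
Qed.

Lemma ratio_ge0 (p : 'I_N.+1 -> R) (j : 'I_N.+1) :
  (forall i, 0 <= p i) -> 0 < upair u p -> interior j -> 0 <= ratio p j.
Proof.
by move=> p_ge0 U_gt0 Ij; rewrite /ratio divr_ge0 ?mulr_ge0 ?p_ge0 ?ltW ?v_gt0.
Qed.

Hypothesis phi_convex : convex_on_nonneg phi.

Lemma entropy_row_le (p : 'I_N.+1 -> R) (i : 'I_N.+1) :
  (forall i, 0 <= p i) -> 0 < upair u p -> interior i ->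
  phi (\sum_(j < N.+1 | interior j) doob i j * ratio p j) <=
  \sum_(j < N.+1 | interior j) doob i j * phi (ratio p j).
Proof.
move=> p_ge0 U_gt0 Ii; apply: jensen => // [j|j|]; last exact: doob_row_sum.
  exact: doob_ge0.
exact: ratio_ge0.
Qed.

Lemma entropy_moran_le (p : 'I_N.+1 -> R) :
  (forall i, 0 <= p i) -> 0 < upair u p ->
  entropy phi u v (moran_apply s p) <= entropy phi u v p.
Proof.
move=> p_ge0 U_gt0; rewrite entropy_moran_apply ?gt_eqF // entropy_doob_mean.
by apply: ler_sum => i Ii; rewrite !ler_pM2r ?u_gt0 ?v_gt0 ?entropy_row_le.
Qed.

Lemma entropy_moran_eq_row (p : 'I_N.+1 -> R) (i : 'I_N.+1) :
  (forall i, 0 <= p i) -> 0 < upair u p ->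
  entropy phi u v (moran_apply s p) = entropy phi u v p -> interior i ->
  \sum_(j < N.+1 | interior j) doob i j * phi (ratio p j) <=
  phi (\sum_(j < N.+1 | interior j) doob i j * ratio p j).
Proof.
move=> p_ge0 U_gt0 E_eq Ii.
set gap := fun k => (\sum_(j < N.+1 | interior j) doob k j * phi (ratio p j)
  - phi (\sum_(j < N.+1 | interior j) doob k j * ratio p j)) * (v k * u k).
have gap_ge0 k : interior k -> 0 <= gap k.
  by move=> Ik; rewrite mulr_ge0 ?subr_ge0 ?entropy_row_le ?mulr_ge0 ?ltW ?v_gt0 ?u_gt0.
have gap_sum : \sum_(k < N.+1 | interior k) gap k =
    entropy phi u v p - entropy phi u v (moran_apply s p).
  rewrite entropy_moran_apply ?gt_eqF // entropy_doob_mean -sumrB.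
  by apply: eq_bigr => k _; rewrite /gap mulrBl !mulrA.
rewrite E_eq subrr in gap_sum.
have := psumr_eq0P gap_ge0 gap_sum Ii; rewrite /gap => /eqP.
rewrite mulf_eq0 mulf_eq0 (gt_eqF (v_gt0 Ii)) (gt_eqF (u_gt0 Ii)) !orbF.
by rewrite subr_eq0 => /eqP ->.
Qed.

Lemma ratio_const_of_entropy_eq (p : 'I_N.+1 -> R) :
  strictly_convex_on_nonneg phi -> (forall i, 0 <= p i) -> 0 < upair u p ->
  entropy phi u v (moran_apply s p) = entropy phi u v p ->
  forall i j : 'I_N.+1, interior i -> interior j -> ratio p i = ratio p j.
Proof.
move=> phi_strict p_ge0 U_gt0 E_eq; apply: interior_path_const => i j Ii Ij ji.
have ratio_mean k : interior k -> 0 < moran s i k ->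
    ratio p k = \sum_(l < N.+1 | interior l) doob i l * ratio p l.
  move=> Ik M_gt0.
  apply: (jensen_eq_mean (P := @interior N) (w := doob i) phi_convex phi_strict).
  - by move=> l; apply: doob_ge0.
  - by move=> l; apply: ratio_ge0.
  - exact: doob_row_sum.
  - exact: Ik.
  - exact: doob_gt0.
  - exact: entropy_moran_eq_row.
by rewrite ratio_mean ?moran_diag_gt0 // [RHS]ratio_mean ?moran_superdiag_gt0.
Qed.

Lemma entropy_moran_eq_of_ratio_const (p : 'I_N.+1 -> R) : upair u p != 0 ->
  (forall i j : 'I_N.+1, interior i -> interior j -> ratio p i = ratio p j) ->
  entropy phi u v (moran_apply s p) = entropy phi u v p.
Proof.
move=> U_neq0 ratio_const; rewrite entropy_moran_apply // entropy_doob_mean.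
apply: eq_bigr => i Ii; congr (_ * _ * _).
have mean_const (f : R -> R) :
    \sum_(j < N.+1 | interior j) doob i j * f (ratio p j) = f (ratio p i).
  rewrite -[RHS]mul1r -(doob_row_sum Ii) mulr_suml.
  by apply: eq_bigr => j Ij; rewrite (ratio_const j i).
by rewrite (mean_const id) mean_const.
Qed.

Lemma ratio_constP (p : 'I_N.+1 -> R) : upair u p != 0 ->
  (forall i j : 'I_N.+1, interior i -> interior j -> ratio p i = ratio p j) <->
  exists l : R, forall j, interior j -> p j = l * v j.
Proof.
move=> U_neq0; split=> [ratio_const|[l pE] i j Ii Ij].
  have [k Ik|no_interior] := pickP (@interior N); last first.
    by move: U_neq0; rewrite /upair big_pred0 ?eqxx.
  exists (ratio p k * upair u p) => j Ij; rewrite -(ratio_const j k) // /ratio.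
  by field; rewrite U_neq0 v_neq0.
by rewrite /ratio !pE //; field; rewrite U_neq0 !v_neq0.
Qed.

End MoranEntropy.

Theorem lemma3 (R : realType) (N : nat) (s : 'I_N.+1 -> R)
    (mu : R) (u v : 'I_N.+1 -> R) (phi : R -> R) :
  (2 <= N)%N ->
  s ord0 = 0 -> s ord_max = 1 ->
  (forall i : 'I_N.+1, interior i -> 0 < s i < 1) ->
  0 < mu ->
  (forall i : 'I_N.+1, interior i -> 0 < u i) ->
  (forall i : 'I_N.+1, interior i -> 0 < v i) ->
  (forall i : 'I_N.+1, interior i ->
     \sum_(j < N.+1 | interior j) moran s i j * v j = mu * v i) ->
  (forall j : 'I_N.+1, interior j ->
     \sum_(i < N.+1 | interior i) u i * moran s i j = mu * u j) ->
  \sum_(i < N.+1 | interior i) v i = 1 ->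
  \sum_(i < N.+1 | interior i) u i * v i = 1 ->
  convex_on_nonneg phi -> phi 1 = 0 ->
  (forall p : 'I_N.+1 -> R, in_simplex p -> 0 < upair u p ->
     entropy phi u v (moran_apply s p) <= entropy phi u v p)
  /\
  (strictly_convex_on_nonneg phi ->
   forall p : 'I_N.+1 -> R, in_simplex p -> 0 < upair u p ->
     (entropy phi u v (moran_apply s p) = entropy phi u v p
      <-> quasi_stationary v p)).
Proof.
move=> N_ge2 s0 sN s_int mu_gt0 u_gt0 v_gt0 v_right u_left v_sum1 _ phi_convex _.
split=> [p [p_ge0 _] U_gt0|phi_strict p p_simplex U_gt0].
  exact: (entropy_moran_le s0 sN s_int mu_gt0 u_gt0 v_gt0 v_right u_left phi_convex).
have [p_ge0 _] := p_simplex.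
rewrite quasi_stationaryP ?(ltnW N_ge2) //.
rewrite -(ratio_constP v_gt0 (lt0r_neq0 U_gt0)); split.
  exact: (ratio_const_of_entropy_eq s0 sN s_int mu_gt0 u_gt0 v_gt0 v_right u_left
            phi_convex phi_strict).
exact: (entropy_moran_eq_of_ratio_const s0 sN mu_gt0 v_gt0 v_right u_left phi
          (lt0r_neq0 U_gt0)).
Qed.
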